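(* Let $m \geq 2$, let $X_1, \dots, X_m, Y, Z$ be arbitrary sets, let $\Delta \subseteq X_1 \times \cdots \times X_m \times Y$, and let $f_1, \dots, f_m : \Delta \to Z$ be functions. Suppose $\Gamma \subseteq \Delta$ is a nonempty subset such that, on $\Gamma$, each function $f_i$ ($1 \leq i \leq m$) does not depend on $x_j \in X_j$ for all $1 \leq j \leq m$, $j \neq i$. Then there exists a subset $\bar\Gamma$ with $\Gamma \subseteq \bar\Gamma \subseteq \Delta$ such that, on $\bar\Gamma$, each $f_i$ ($1 \leq i \leq m$) does not depend on $x_j \in X_j$ for all $1 \leq j \leq m$, $j \neq i$, and $\bar\Gamma$ is maximal with respect to inclusion among subsets of $\Delta$ containing $\Gamma$ that have this property.
   Context: For a subset $\Gamma \subseteq \Delta \subseteq X_1 \times \cdots \times X_m \times Y$ and functions $f_1,\dots,f_m:\Delta \to Z$, one says that ''on $\Gamma$, each $f_i$ ($1\le i\le m$) does not depend on $x_j \in X_j$ for $1 \le j \le m$, $j \ne i$'' if and only if there exist functions $g_i : pr_{X_i \times Y}(\Gamma) \to Z$, $1 \leq i \leq m$, such that $f_i|_\Gamma = g_i \circ pr_{X_i \times Y}|_\Gamma$ for every $1 \leq i \leq m$. Here $pr_{X_i \times Y} : X_1 \times \cdots \times X_m \times Y \to X_i \times Y$ denotes the projection $(x_1, \dots, x_m, y) \mapsto (x_i, y)$. *)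

From mathcomp Require Import all_boot.
Set Implicit Arguments. Unset Strict Implicit. Unset Printing Implicit Defensive.

Definition ambient (m : nat) (X : 'I_m -> Type) (Y : Type) : Type :=
  ((forall i : 'I_m, X i) * Y)%type.

Definition pr (m : nat) (X : 'I_m -> Type) (Y : Type) (i : 'I_m)
  (p : ambient X Y) : (X i * Y)%type := (p.1 i, p.2).

Definition pr_image (m : nat) (X : 'I_m -> Type) (Y : Type) (i : 'I_m)
  (Gamma : ambient X Y -> Prop) : Type :=
  { u : (X i * Y)%type | exists p, Gamma p /\ pr i p = u }.

(* "On Gamma (a subset of Delta), each f_i does not depend on x_j, j <> i":
   Gamma is contained in Delta and there are g_i : pr_{X_i x Y}(Gamma) -> Z
   with f_i|_Gamma = g_i o pr_{X_i x Y}|_Gamma for every i. *)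
Definition indep_on (m : nat) (X : 'I_m -> Type) (Y Z : Type)
  (Delta : ambient X Y -> Prop)
  (f : 'I_m -> {p : ambient X Y | Delta p} -> Z)
  (Gamma : ambient X Y -> Prop) : Prop :=
  exists HGD : (forall p, Gamma p -> Delta p),
  exists g : (forall i : 'I_m, pr_image i Gamma -> Z),
  forall (i : 'I_m) (p : ambient X Y) (hp : Gamma p),
    f i (exist _ p (HGD p hp))
    = g i (exist _ (pr i p) (ex_intro _ p (conj hp erefl))).

(* Independence on G amounts to G being contained in Delta and each f_i taking
   the same value at any two points of G with the same (x_i, y)-projection.
   This is a condition on pairs of points, so it passes to unions of chains,
   and Zorn's lemma, started at Gamma, yields a maximal such set. *)

From mathcomp Require Import all_boot.
From mathcomp Require Import boolp classical_sets.
Set Implicit Arguments. Unset Strict Implicit.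
Local Open Scope classical_set_scope.

(* Zorn is applied to P (A0 `|` _): adding A0 to a chain of such sets gives a
   chain of P, nonempty even when the original chain is empty. *)
Lemma Zorn_bigcup_above (T : Type) (P : set (set T)) (A0 : set T) :
  P A0 ->
  (forall F : set (set T), F `<=` P -> total_on F subset ->
     P (\bigcup_(X in F) X)) ->
  exists A, [/\ A0 `<=` A, P A & forall B, A `<=` B -> P B -> B `<=` A].
Proof.
move=> PA0 Pchain.
pose Q B := P (A0 `|` B).
have [A [QA Amax]] : exists A, Q A /\ forall B, A `<` B -> ~ Q B.
  apply: Zorn_bigcup => F FQ Ftot; rewrite /Q.
  pose F' := A0 |` [set A0 `|` X | X in F].
  have -> : A0 `|` \bigcup_(X in F) X = \bigcup_(X in F') X.
    apply/seteqP; split=> x.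
      case=> [A0x | [X FX Xx]]; first by exists A0 => //; left.
      by exists (A0 `|` X); [right; exists X | right].
    case=> Y [-> | [X FX <-]] Yx; first by left.
    by case: Yx => [|Xx]; [left | right; exists X].
  apply: Pchain => [Y [-> // | [X FX <-]] | Y Y']; first exact: FQ.
  move=> [-> | [X FX <-]] [-> | [X' FX' <-]]; try by [left | right].
  by case: (Ftot _ _ FX FX') => sub; [left | right]; apply: setUS.
exists (A0 `|` A); split=> [|//|B AB PB]; first exact: subsetUl.
have QB : Q B.
  have A0B : A0 `<=` B by apply: subset_trans AB; exact: subsetUl.
  by rewrite /Q ((setUidPr _ _).2 A0B).
apply: subset_trans (@subsetUr _ A0 A).
apply: contrapT => BA; apply: (Amax B) => //.
by split=> //; apply: subset_trans AB; apply: subsetUr.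
Qed.

Section IndependenceOnFibres.
Variables (m : nat) (X : 'I_m -> Type) (Y Z : Type)
  (Delta : set (ambient X Y)) (f : 'I_m -> {p : ambient X Y | Delta p} -> Z).

Definition constant_on_fibres (G : set (ambient X Y)) : Prop :=
  forall i p q, G p -> G q -> pr i p = pr i q ->
  forall hp hq, f i (exist _ p hp) = f i (exist _ q hq).

Lemma indep_on_constant G : indep_on f G -> constant_on_fibres G.
Proof.
move=> [GD [g fg]] i p q Gp Gq pq hp hq.
have -> : exist _ p hp = exist Delta p (GD p Gp) by exact: eq_exist.
have -> : exist _ q hq = exist Delta q (GD q Gq) by exact: eq_exist.
by rewrite !fg; congr (g i _); apply: eq_exist.
Qed.

Lemma constant_indep_on G :
  G `<=` Delta -> constant_on_fibres G -> indep_on f G.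
Proof.
move=> GD fibG; exists GD.
pose g i (u : pr_image i G) : Z :=
  let w := cid (proj2_sig u) in f i (exist _ _ (GD _ (proj1 (proj2_sig w)))).
exists g => i p Gp; rewrite /g /=.
by case: cid => q [Gq qp] /=; apply: fibG.
Qed.

Lemma indep_onE G : indep_on f G <-> G `<=` Delta /\ constant_on_fibres G.
Proof.
split=> [hG | [GD fibG]]; last exact: constant_indep_on.
by split; [case: hG | exact: indep_on_constant].
Qed.

Lemma indep_on_bigcup (F : set (set (ambient X Y))) :
  F `<=` indep_on f -> total_on F subset -> indep_on f (\bigcup_(G in F) G).
Proof.
move=> Findep Ftot; apply/indep_onE; split.
  by move=> p [G FG Gp]; case/indep_onE: (Findep G FG) => GD _; exact: GD.
move=> i p q [G FG Gp] [G' FG' G'q].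
have [H [FH Hp Hq]] : exists H, [/\ F H, H p & H q].
  by case: (Ftot _ _ FG FG') => sub; [exists G' | exists G]; split; auto.
by case/indep_onE: (Findep H FH) => _; apply.
Qed.

End IndependenceOnFibres.

Theorem mainTheorem1 (m : nat) (hm : 2 <= m) (X : 'I_m -> Type) (Y Z : Type)
  (Delta : ambient X Y -> Prop)
  (f : 'I_m -> {p : ambient X Y | Delta p} -> Z)
  (Gamma : ambient X Y -> Prop)
  (hGD : forall p, Gamma p -> Delta p)
  (hne : exists p, Gamma p)
  (hG : indep_on f Gamma) :
  exists Gbar : ambient X Y -> Prop,
    (forall p, Gamma p -> Gbar p) /\
    (forall p, Gbar p -> Delta p) /\
    indep_on f Gbar /\
    (forall G' : ambient X Y -> Prop,
       (forall p, Gamma p -> G' p) ->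
       (forall p, G' p -> Delta p) ->
       indep_on f G' ->
       (forall p, Gbar p -> G' p) ->
       forall p, G' p -> Gbar p).
Proof.
have [Gbar [GammaGbar indepGbar Gbarmax]] :=
  Zorn_bigcup_above hG (@indep_on_bigcup _ _ _ _ _ f).
exists Gbar; split=> //; split; first by case/indep_onE: indepGbar.
by split=> // G' _ _ indepG' GbarG'; apply: Gbarmax.
Qed.
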